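(* Let $(A,B)$ be a finite-dimensional associative superalgebra over an algebraically closed field $\mathbb{K}$ of characteristic zero endowed with a homogeneous symmetric structure $B$. Then $A$ is an orthogonal (with respect to $B$) direct sum of $B$-irreducible graded two-sided ideals.
   Context: A superalgebra is $\mathbb{Z}_2$-graded, $A=A_{\bar 0}\oplus A_{\bar 1}$, $A_\alpha A_\beta\subseteq A_{\alpha+\beta}$. A homogeneous symmetric structure on $A$ is a bilinear form $B$ which is either even ($B(A_{\bar 0},A_{\bar 1})=0$) or odd ($B(A_{\bar 0},A_{\bar 0})=B(A_{\bar 1},A_{\bar 1})=0$), and is supersymmetric ($B(x,y)=(-1)^{|x||y|}B(y,x)$ for homogeneous $x,y$), associative ($B(xy,z)=B(x,yz)$) and non-degenerate. A graded two-sided ideal $I$ of $A$ is non-degenerate if $B|_{I\times I}$ is non-degenerate, and it is $B$-irreducible if it is non-degenerate and contains no non-degenerate graded two-sided ideal of $A$ other than $\{0\}$ and $I$. *)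

From HB Require Import structures.
From mathcomp Require Import all_boot all_order all_algebra.
Set Implicit Arguments. Unset Strict Implicit. Unset Printing Implicit Defensive.
Import GRing.Theory.
Local Open Scope ring_scope.

(* A finite-dimensional (not necessarily unital) associative superalgebra over K
   is modelled as a vector space V : vectType K with a bilinear associative
   product [mul] and a Z2-grading [Ag : bool -> {vspace V}] (false = even,
   true = odd) with V = Ag false (+) Ag true. *)

Section Super.
Variables (K : fieldType) (V : vectType K).

Definition bilinear_mul (mul : V -> V -> V) : Prop :=
  (forall a x y z, mul (a *: x + y) z = a *: mul x z + mul y z) /\
  (forall a x y z, mul x (a *: y + z) = a *: mul x y + mul x z).

Definition associative_mul (mul : V -> V -> V) : Prop :=
  forall x y z, mul (mul x y) z = mul x (mul y z).

Definition Z2_grading (Ag : bool -> {vspace V}) : Prop :=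
  directv (Ag false + Ag true)%VS /\ (Ag false + Ag true = fullv)%VS.

Definition graded_mul (mul : V -> V -> V) (Ag : bool -> {vspace V}) : Prop :=
  forall (a b : bool) x y, x \in Ag a -> y \in Ag b -> mul x y \in Ag (a (+) b).

Definition superalgebra (mul : V -> V -> V) (Ag : bool -> {vspace V}) : Prop :=
  [/\ bilinear_mul mul, associative_mul mul, Z2_grading Ag & graded_mul mul Ag].

Definition bilinear_form (B : V -> V -> K) : Prop :=
  (forall a x y z, B (a *: x + y) z = a * B x z + B y z) /\
  (forall a x y z, B x (a *: y + z) = a * B x y + B x z).

Definition even_form (Ag : bool -> {vspace V}) (B : V -> V -> K) : Prop :=
  forall x y, x \in Ag false -> y \in Ag true -> B x y = 0.

Definition odd_form (Ag : bool -> {vspace V}) (B : V -> V -> K) : Prop :=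
  (forall x y, x \in Ag false -> y \in Ag false -> B x y = 0) /\
  (forall x y, x \in Ag true -> y \in Ag true -> B x y = 0).

Definition supersymmetric (Ag : bool -> {vspace V}) (B : V -> V -> K) : Prop :=
  forall (a b : bool) x y, x \in Ag a -> y \in Ag b ->
    B x y = (-1) ^+ (a && b) * B y x.

Definition associative_form (mul : V -> V -> V) (B : V -> V -> K) : Prop :=
  forall x y z, B (mul x y) z = B x (mul y z).

Definition nondegenerate (B : V -> V -> K) : Prop :=
  forall x, (forall y, B x y = 0) -> x = 0.

Definition homogeneous_symmetric_structure (mul : V -> V -> V)
    (Ag : bool -> {vspace V}) (B : V -> V -> K) : Prop :=
  [/\ bilinear_form B, even_form Ag B \/ odd_form Ag B, supersymmetric Ag B,
      associative_form mul B & nondegenerate B].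

Definition graded_ideal (mul : V -> V -> V) (Ag : bool -> {vspace V})
    (I : {vspace V}) : Prop :=
  (I = (I :&: Ag false) + (I :&: Ag true))%VS /\
  (forall x y, x \in I -> mul x y \in I /\ mul y x \in I).

Definition nondegenerate_on (B : V -> V -> K) (I : {vspace V}) : Prop :=
  forall x, x \in I -> (forall y, y \in I -> B x y = 0) -> x = 0.

Definition nondegenerate_ideal mul Ag B (I : {vspace V}) : Prop :=
  graded_ideal mul Ag I /\ nondegenerate_on B I.

Definition B_irreducible mul Ag B (I : {vspace V}) : Prop :=
  nondegenerate_ideal mul Ag B I /\
  (forall J : {vspace V}, nondegenerate_ideal mul Ag B J -> (J <= I)%VS ->
     J = 0%VS \/ J = I).

End Super.

(* If I <= J are nondegenerate graded ideals, the B-orthogonal of I inside J is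
   again a nondegenerate graded ideal and J = I (+) (J :&: I^perp). Gradedness
   comes from the parity of B (a homogeneous element pairs nontrivially with
   homogeneous elements of one degree only) together with supersymmetry, the
   ideal property from associativity and nondegeneracy of B on A. Splitting off
   a B-irreducible ideal, which exists by descent on the dimension, and
   recursing on its orthogonal complement decomposes A. *)

From HB Require Import structures.
From mathcomp Require Import all_boot all_order all_algebra zify.
From Stdlib Require Import Classical.
Set Implicit Arguments. Unset Strict Implicit. Unset Printing Implicit Defensive.
Import GRing.Theory.
Local Open Scope ring_scope.

Section ConsFamily.
Variables (K : fieldType) (V : vectType K).

Definition cons_family n (I : {vspace V}) (Is : 'I_n -> {vspace V}) (i : 'I_n.+1) :=
  if unlift ord0 i is Some j then Is j else I.

Lemma cons_family0 n I (Is : 'I_n -> {vspace V}) : cons_family I Is ord0 = I.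
Proof. by rewrite /cons_family unlift_none. Qed.

Lemma cons_family_lift n I (Is : 'I_n -> {vspace V}) j :
  cons_family I Is (lift ord0 j) = Is j.
Proof. by rewrite /cons_family liftK. Qed.

Lemma sumv_cons_family n I (Is : 'I_n -> {vspace V}) :
  (\sum_(i < n.+1) cons_family I Is i = I + \sum_(j < n) Is j)%VS.
Proof.
rewrite big_ord_recl cons_family0; congr (_ + _)%VS.
by apply: eq_bigr => j _; rewrite cons_family_lift.
Qed.

Lemma directv_cons_family n I (Is : 'I_n -> {vspace V}) :
  directv (\sum_(j < n) Is j) -> (I :&: \sum_(j < n) Is j = 0)%VS ->
  directv (\sum_(i < n.+1) cons_family I Is i).
Proof.
move=> dIs dI; rewrite directvE /= sumv_cons_family dimv_disjoint_sum //.
rewrite big_ord_recl cons_family0 (directvP dIs) /=.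
by under [X in _ == (_ + X)%N]eq_bigr => j _ do rewrite cons_family_lift.
Qed.
End ConsFamily.

Section BilinearForm.
Variables (K : fieldType) (V : vectType K) (B : V -> V -> K).
Hypothesis hB : bilinear_form B.

Lemma form0l z : B 0 z = 0.
Proof.
apply: (@addrI _ (B 0 z)); rewrite addr0 -{1}(mul1r (B 0 z)) -hB.1.
by rewrite scale1r addr0.
Qed.

Lemma form0r z : B z 0 = 0.
Proof.
apply: (@addrI _ (B z 0)); rewrite addr0 -{1}(mul1r (B z 0)) -hB.2.
by rewrite scale1r addr0.
Qed.

Lemma formDl x y z : B (x + y) z = B x z + B y z.
Proof. by have := hB.1 1 x y z; rewrite scale1r mul1r. Qed.

Lemma formDr z x y : B z (x + y) = B z x + B z y.
Proof. by have := hB.2 1 z x y; rewrite scale1r mul1r. Qed.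

Lemma formZl a x z : B (a *: x) z = a * B x z.
Proof. by rewrite -[a *: x]addr0 hB.1 form0l addr0. Qed.

Lemma formZr z a x : B z (a *: x) = a * B z x.
Proof. by rewrite -[a *: x]addr0 hB.2 form0r addr0. Qed.

Section Orthogonal.
Variable U : {vspace V}.

Definition orthv_fun (x : V) : 'rV[K]_(\dim U) := \row_i B x (vbasis U)`_i.

Fact orthv_fun_is_linear : linear orthv_fun.
Proof. by move=> a x y; apply/rowP=> i; rewrite !mxE formDl formZl. Qed.

HB.instance Definition _ :=
  GRing.isLinear.Build K V 'rV_(\dim U) *:%R orthv_fun orthv_fun_is_linear.

Definition orthv : {vspace V} := lker (linfun orthv_fun).

Lemma mem_orthv x : reflect (forall y, y \in U -> B x y = 0) (x \in orthv).
Proof.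
rewrite memv_ker lfunE /=; apply: (iffP eqP) => [Bx0 y /coord_vbasis -> | BxU].
  rewrite (big_morph _ (formDr x) (form0r x)) big1 // => i _.
  have := congr1 (fun v : 'rV[K]_(\dim U) => v 0 i) Bx0.
  by rewrite formZr !mxE => ->; rewrite mulr0.
by apply/rowP=> i; rewrite !mxE BxU // vbasis_mem // mem_nth // size_tuple.
Qed.

Lemma dim_orthv : (\dim (fullv : {vspace V}) <= \dim orthv + \dim U)%N.
Proof.
rewrite -(limg_ker_dim (linfun orthv_fun) fullv) capfv leq_add2l.
by rewrite (leq_trans (dimvS (subvf _))) // dimvf dim_matrix mul1r.
Qed.
End Orthogonal.

Definition orth_family n (Is : 'I_n -> {vspace V}) :=
  forall i j, i != j -> forall x y, x \in Is i -> y \in Is j -> B x y = 0.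

Lemma orth_family_cons n (I : {vspace V}) (Is : 'I_n -> {vspace V}) :
    orth_family Is ->
    (forall x y, x \in I -> y \in (\sum_(j < n) Is j)%VS -> B x y = 0) ->
    (forall x y, x \in (\sum_(j < n) Is j)%VS -> y \in I -> B x y = 0) ->
  orth_family (cons_family I Is).
Proof.
move=> oIs oI oI' i j; rewrite /cons_family.
have memIs k : (Is k <= \sum_(j < n) Is j)%VS by apply: (sumv_sup k).
case: unliftP => [i' ->|->]; case: unliftP => [j' ->|->] //.
- by rewrite (inj_eq lift_inj) => /oIs.
- by move=> _ x y /(subvP (memIs i')) /oI'; apply.
- by move=> _ x y xI /(subvP (memIs j')); apply: oI.
Qed.

End BilinearForm.

Section SuperForm.
Variables (K : fieldType) (V : vectType K) (mul : V -> V -> V)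
  (Ag : bool -> {vspace V}) (B : V -> V -> K).
Hypotheses (hB : bilinear_form B) (hSS : supersymmetric Ag B)
  (hpar : even_form Ag B \/ odd_form Ag B)
  (hAs : associative_form mul B) (hND : nondegenerate B).

Definition graded_subspace (U : {vspace V}) :=
  (U = (U :&: Ag false) + (U :&: Ag true))%VS.

Lemma graded_orthr U z : graded_subspace U ->
    (forall b y, y \in (U :&: Ag b)%VS -> B z y = 0) ->
  forall y, y \in U -> B z y = 0.
Proof.
move=> gU Bz0 y; rewrite gU => /memv_addP[y0 y0U [y1 y1U ->]].
by rewrite formDr // (Bz0 _ _ y0U) (Bz0 _ _ y1U) addr0.
Qed.

Lemma graded_orthl U z : graded_subspace U ->
    (forall a x, x \in (U :&: Ag a)%VS -> B x z = 0) ->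
  forall x, x \in U -> B x z = 0.
Proof.
move=> gU B0z x; rewrite gU => /memv_addP[x0 x0U [x1 x1U ->]].
by rewrite formDl // (B0z _ _ x0U) (B0z _ _ x1U) addr0.
Qed.

Lemma graded_orth_sym P Q : graded_subspace P -> graded_subspace Q ->
    (forall x y, x \in P -> y \in Q -> B x y = 0) ->
  forall y x, y \in Q -> x \in P -> B y x = 0.
Proof.
move=> gP gQ BPQ y x yQ xP; move: y yQ.
apply: graded_orthl gQ _ => b y /memv_capP[yQ yb].
move: x xP; apply: graded_orthr gP _ => a x /memv_capP[xP xa].
by rewrite (hSS yb xa) BPQ ?mulr0.
Qed.

Lemma form_parity : exists p : bool, forall a b x y,
  x \in Ag a -> y \in Ag b -> a (+) b != p -> B x y = 0.
Proof.
case: hpar => [ev | [od0 od1]]; [exists false | exists true].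
  case=> [] [] // x y xa yb _; last exact: ev.
  by rewrite (hSS xa yb) ev ?mulr0.
by case=> [] [] // x y xa yb _; [apply: od1 | apply: od0].
Qed.

Section OrthComplement.
Variables J I : {vspace V}.
Hypotheses (hJ : nondegenerate_ideal mul Ag B J) (hI : nondegenerate_ideal mul Ag B I)
  (IJ : (I <= J)%VS).

Local Notation Jc := (J :&: orthv B I)%VS.

Lemma mem_orth_compl x :
  reflect (x \in J /\ forall y, y \in I -> B x y = 0) (x \in Jc).
Proof.
by rewrite memv_cap; apply: (iffP andP) => -[xJ /(mem_orthv hB)].
Qed.

Lemma capv_orth_compl : (I :&: Jc = 0)%VS.
Proof.
apply/eqP; rewrite -subv0; apply/subvP=> x /memv_capP[xI /mem_orth_compl[_ xI0]].
by rewrite memv0; apply/eqP/hI.2.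
Qed.

Lemma addv_orth_compl : (I + Jc = J)%VS.
Proof.
apply/eqP; rewrite eqEdim subv_add IJ capvSl dimv_disjoint_sum ?capv_orth_compl //=.
have := dimv_sum_cap J (orthv B I); have := dim_orthv B I.
have := dimvS (subvf (J + orthv B I)%VS); lia.
Qed.

Lemma graded_orth_compl : graded_subspace Jc.
Proof.
have [p Bpar] := form_parity.
have orth_part a u w : u + w \in Jc -> u \in Ag a -> w \in Ag (~~ a) ->
    forall y, y \in I -> B u y = 0.
  move=> /mem_orth_compl[_ uwI] ua wa.
  apply: graded_orthr hI.1.1 _ => b y /memv_capP[yI yb].
  (* by parity, a homogeneous y is B-orthogonal to u or to w *)
  have [abp | abp] := eqVneq (a (+) b) p; last exact: Bpar _ _ _ _ ua yb abp.
  have Bwy : B w y = 0 by apply: (Bpar (~~ a) b) => //; rewrite addNb abp; case: (p).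
  by have := uwI y yI; rewrite formDl // Bwy addr0.
apply/eqP; rewrite eqEsubv subv_add !capvSl !andbT.
apply/subvP=> x xJc; have /mem_orth_compl[xJ _] := xJc.
rewrite hJ.1.1 in xJ.
case/memv_addP: xJ => x0 /memv_capP[x0J x0A] [x1 /memv_capP[x1J x1A] ex].
rewrite ex in xJc *; apply: memv_add; rewrite memv_cap ?x0A ?x1A andbT.
  by apply/mem_orth_compl; split=> //; apply: orth_part xJc x0A x1A.
rewrite addrC in xJc.
by apply/mem_orth_compl; split=> //; apply: orth_part xJc x1A x0A.
Qed.

Lemma ideal_orth_compl : graded_ideal mul Ag Jc.
Proof.
split; first exact: graded_orth_compl.
move=> x z /mem_orth_compl[xJ xI].
have xI0 y : y \in I -> mul x y = 0.
  by move=> yI; apply: hND => w; rewrite hAs xI // (hI.1.2 y w yI).1.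
split; apply/mem_orth_compl; split.
- exact: (hJ.1.2 x z xJ).1.
- by move=> y yI; rewrite hAs xI // (hI.1.2 y z yI).2.
- exact: (hJ.1.2 x z xJ).2.
- by move=> y yI; rewrite hAs xI0 // form0r.
Qed.

Lemma nondeg_ideal_orth_compl : nondegenerate_ideal mul Ag B Jc.
Proof.
split=> [|x xJc xJc0]; first exact: ideal_orth_compl.
have /mem_orth_compl[xJ xI] := xJc.
apply: hJ.2 xJ _ => y; rewrite -addv_orth_compl => /memv_addP[u uI [v vJc ->]].
by rewrite formDr // xI // xJc0 // addr0.
Qed.

Lemma orth_compl_orth x y : x \in I -> y \in Jc -> B x y = 0.
Proof.
apply: (graded_orth_sym graded_orth_compl hI.1.1).
by move=> u v /mem_orth_compl[_ uI]; apply: uI.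
Qed.
End OrthComplement.

Lemma nondeg_ideal_fullv : Z2_grading Ag -> nondegenerate_ideal mul Ag B fullv.
Proof.
move=> [_ fullA]; split; first split.
- by rewrite !capfv fullA.
- by move=> x y _; split; rewrite memvf.
- by move=> x _ Bx0; apply: hND => y; apply: Bx0; rewrite memvf.
Qed.

Lemma nondeg_ideal_has_irreducible J : nondegenerate_ideal mul Ag B J -> J != 0%VS ->
  exists I, [/\ B_irreducible mul Ag B I, (I <= J)%VS & I != 0%VS].
Proof.
elim: {J}_.+1 {-2}J (ltnSn (\dim J)) => // m IH J ltJm hJ J0.
have [[I [hI IJ I0 IneJ]] | noI] := classic (exists I,
    [/\ nondegenerate_ideal mul Ag B I, (I <= J)%VS, I != 0%VS & I != J]).
  have ltIJ : (\dim I < \dim J)%N.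
    by rewrite ltnNge; apply: contra IneJ => leJI; rewrite eqEdim IJ.
  have [I' [irrI' I'I I'0]] := IH I ltac:(lia) hI I0.
  by exists I'; split=> //; apply: subv_trans IJ.
exists J; split=> //; split=> // I hI IJ.
have [-> | I0] := eqVneq I 0%VS; [by left | right].
by have [// | IneJ] := eqVneq I J; case: noI; exists I.
Qed.

Lemma orth_decomposition J : nondegenerate_ideal mul Ag B J ->
  exists n (Is : 'I_n -> {vspace V}),
    [/\ forall i, B_irreducible mul Ag B (Is i), directv (\sum_(i < n) Is i),
        (\sum_(i < n) Is i)%VS = J & orth_family B Is].
Proof.
elim: {J}_.+1 {-2}J (ltnSn (\dim J)) => // m IH J ltJm hJ.
have [-> | J0] := eqVneq J 0%VS.
  exists 0%N, (fun=> 0%VS); split; try by case.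
    by rewrite directvE /= !big_ord0 dimv0.
  by rewrite big_ord0.
have [I [irrI IJ I0]] := nondeg_ideal_has_irreducible hJ J0.
have hI := irrI.1; have hJc := nondeg_ideal_orth_compl hJ hI IJ.
have ltJc : (\dim (J :&: orthv B I) < m)%N.
  have := dimv_disjoint_sum (capv_orth_compl J hI).
  rewrite (addv_orth_compl hI IJ) => dimJ.
  by move: I0; rewrite -dimv_eq0; lia.
have [n [Is [irrIs dIs sumIs oIs]]] := IH _ ltJc hJc.
exists n.+1, (cons_family I Is); split.
- by move=> i; rewrite /cons_family; case: unliftP.
- by apply: directv_cons_family; rewrite // sumIs capv_orth_compl.
- by rewrite sumv_cons_family sumIs (addv_orth_compl hI IJ).
- apply: orth_family_cons; rewrite // sumIs.
    by move=> x y xI yJc; apply: (orth_compl_orth hJ hI) xI yJc.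
  by move=> x y /mem_orth_compl[_ xI]; apply: xI.
Qed.
End SuperForm.

Theorem mainTheorem7 (K : closedFieldType) (charK0 : [pchar K] =i pred0)
    (V : vectType K) (mul : V -> V -> V) (Ag : bool -> {vspace V}) (B : V -> V -> K) :
  superalgebra mul Ag -> homogeneous_symmetric_structure mul Ag B ->
  exists (n : nat) (Is : 'I_n -> {vspace V}),
    [/\ forall i, B_irreducible mul Ag B (Is i),
        directv (\sum_(i < n) Is i)%VS,
        (\sum_(i < n) Is i)%VS = fullv &
        forall i j : 'I_n, i != j -> forall x y, x \in Is i -> y \in Is j -> B x y = 0].
Proof.
move=> [_ _ gradedA _] [hB hpar hSS hAs hND].
exact: orth_decomposition hB hSS hpar hAs hND _ (nondeg_ideal_fullv mul hND gradedA).
Qed.
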